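(* Let $\mathcal S_2=\{\rho_\theta:\theta\in\Theta_2\}$, $\Theta_2\subset\mathbb{R}^{d_2}$, be a quantum statistical model and $\mathcal S_1=\{\rho_{(\theta_1,\dots,\theta_{d_1},0,\dots,0)}\}$ the submodel with $d_1\le d_2$ free parameters. Fix $\theta=(\theta_1,\dots,\theta_{d_1},0,\dots,0)\in\Theta_2$ and assume $\mathcal S_2$ is D-invariant at $\theta$. Let $\vec X=(X^1,\dots,X^{d_1})$ be Hermitian matrices lying in the real span of the SLDs $L_{\theta;1},\dots,L_{\theta;d_2}$ of $\mathcal S_2$ and satisfying $\mathrm{Tr}\,(\partial_k\rho_\theta)X^j=\delta^j_k$ for $j,k=1,\dots,d_1$. Define the $d_1\times d_2$ real matrix $P_{\vec X}$ by $(P_{\vec X})^k_l=\mathrm{Tr}\,(\partial_l\rho_\theta)X^k$ ($k\le d_1$, $l\le d_2$). Then for every real symmetric positive definite $d_1\times d_1$ matrix $G$, $$C_\theta(G,\vec X)=C^R_{\theta,2}\big(P_{\vec X}^TGP_{\vec X}\big),$$ where $C^R_{\theta,2}$ denotes the RLD bound of the model $\mathcal S_2$ at $\theta$ (evaluated at the positive semidefinite $d_2\times d_2$ weight $P_{\vec X}^TGP_{\vec X}$).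
   Context: A quantum statistical model is a family of strictly positive density matrices on a finite-dimensional Hilbert space depending smoothly on a parameter in an open subset of $\mathbb{R}^d$; $\partial_k=\partial/\partial\theta^k$. Notation: $X\circ Y=(XY+YX)/2$; $\langle X,Y\rangle_\theta=\mathrm{Tr}\,\rho_\theta(X^*\circ Y)$. SLDs $L_{\theta;j}$: Hermitian with $\partial_j\rho_\theta=\rho_\theta\circ L_{\theta;j}$. RLDs $\tilde L_{\theta;j}$: $\partial_j\rho_\theta=\rho_\theta\tilde L_{\theta;j}$; RLD Fisher matrix $\tilde J_{\theta;j,k}=\mathrm{Tr}\,\rho_\theta\tilde L_{\theta;k}\tilde L_{\theta;j}^*$. The D-operator $\mathcal D_\theta$ is defined on Hermitian matrices by $\rho_\theta\circ\mathcal D_\theta(X)=i[X,\rho_\theta]$; the model is D-invariant at $\theta$ if the real span of its SLDs at $\theta$ is mapped into itself by $\mathcal D_\theta$. For a complex matrix $W$: $\mathrm{Re}\,W=(W+\bar W)/2$, $\mathrm{Im}\,W=(W-\bar W)/(2i)$, $|A|=(A^*A)^{1/2}$. RLD bound with weight $H$ (real symmetric positive semidefinite): $C^R_\theta(H)=\mathrm{tr}\sqrt H\,\mathrm{Re}(\tilde J_\theta^{-1})\sqrt H+\mathrm{tr}|\sqrt H\,\mathrm{Im}(\tilde J_\theta^{-1})\sqrt H|$. For a tuple $\vec X$ of Hermitian matrices, $Z_\theta^{k,j}(\vec X)=\mathrm{Tr}\,\rho_\theta X^kX^j$ and $C_\theta(G,\vec X)=\mathrm{tr}\sqrt G\,\mathrm{Re}\,Z_\theta(\vec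 X)\sqrt G+\mathrm{tr}|\sqrt G\,\mathrm{Im}\,Z_\theta(\vec X)\sqrt G|$. *)

From HB Require Import structures.
From mathcomp Require Import all_boot all_order all_algebra.
From mathcomp Require Import all_classical all_reals.
From mathcomp Require Import topology normedtype derive.
From mathcomp Require Import complex.
Set Implicit Arguments. Unset Strict Implicit. Unset Printing Implicit Defensive.
Import Order.TTheory GRing.Theory Num.Theory ComplexField.
Import numFieldNormedType.Exports.
Local Open Scope ring_scope.
Local Open Scope complex_scope.

Section QDefs.
Variable R : realType.
Local Notation C := R[i].

Definition conjM m n (W : 'M[C]_(m, n)) : 'M[C]_(m, n) := map_mx (@conjc R) W.
Definition dag m n (W : 'M[C]_(m, n)) : 'M[C]_(n, m) := (conjM W)^T.

Definition herm n (A : 'M[C]_n) : Prop := dag A = A.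

Definition psd n (A : 'M[C]_n) : Prop :=
  herm A /\ forall v : 'cV[C]_n, 0 <= (dag v *m A *m v) 0 0.
Definition posdef n (A : 'M[C]_n) : Prop :=
  herm A /\ forall v : 'cV[C]_n, v != 0 -> 0 < (dag v *m A *m v) 0 0.

Definition strictly_pos_density n (A : 'M[C]_n) : Prop :=
  posdef A /\ \tr A = 1.

Definition jprod n (X Y : 'M[C]_n) : 'M[C]_n := (2%:R)^-1 *: (X *m Y + Y *m X).

Definition ReM m n (W : 'M[C]_(m, n)) : 'M[C]_(m, n) := (2%:R)^-1 *: (W + conjM W).
Definition ImM m n (W : 'M[C]_(m, n)) : 'M[C]_(m, n) :=
  (2%:R * 'i)^-1 *: (W - conjM W).

Definition sqrtm n (A : 'M[C]_n) : 'M[C]_n :=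
  match boolp.pselect (exists B : 'M[C]_n, psd B /\ B *m B = A) with
  | left h => projT1 (boolp.cid h)
  | right _ => 0
  end.

Definition absm n (A : 'M[C]_n) : 'M[C]_n := sqrtm (dag A *m A).

Definition cplxM m n (M : 'M[R]_(m, n)) : 'M[C]_(m, n) := map_mx (fun x => x%:C) M.

Definition real_sym_posdef n (G : 'M[R]_n) : Prop :=
  G^T = G /\ forall v : 'cV[R]_n, v != 0 -> 0 < (v^T *m G *m v) 0 0.

Definition pderiv d N (rho : 'rV[R]_d -> 'M[C]_N) (theta : 'rV[R]_d) (k : 'I_d)
  : 'M[C]_N :=
  \matrix_(i, j)
    ((derive (fun t => @complex.Re R (rho t i j)) theta (delta_mx 0 k))%:C
     + 'i * (derive (fun t => @complex.Im R (rho t i j)) theta (delta_mx 0 k))%:C).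

Definition is_SLD N (rho dr X : 'M[C]_N) : Prop := herm X /\ dr = jprod rho X.
Definition is_RLD N (rho dr X : 'M[C]_N) : Prop := dr = rho *m X.

Definition in_real_span d N (L : 'I_d -> 'M[C]_N) (Y : 'M[C]_N) : Prop :=
  exists c : 'I_d -> R, Y = \sum_(l < d) (c l)%:C *: L l.

Definition is_Dop N (rho X Y : 'M[C]_N) : Prop :=
  herm Y /\ jprod rho Y = 'i *: (X *m rho - rho *m X).

Definition D_invariant d N (rho : 'M[C]_N) (L : 'I_d -> 'M[C]_N) : Prop :=
  forall X Y, in_real_span L X -> is_Dop rho X Y -> in_real_span L Y.

Definition RLD_fisher d N (rho : 'M[C]_N) (Lt : 'I_d -> 'M[C]_N) : 'M[C]_d :=
  \matrix_(j, k) \tr (rho *m Lt k *m dag (Lt j)).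

Definition holevo_form d (H W : 'M[C]_d) : C :=
  \tr (sqrtm H *m ReM W *m sqrtm H) + \tr (absm (sqrtm H *m ImM W *m sqrtm H)).

Definition RLD_bound d N (rho : 'M[C]_N) (Lt : 'I_d -> 'M[C]_N) (H : 'M[C]_d) : C :=
  holevo_form H (invmx (RLD_fisher rho Lt)).

Definition Zmat d N (rho : 'M[C]_N) (X : 'I_d -> 'M[C]_N) : 'M[C]_d :=
  \matrix_(k, j) \tr (rho *m X k *m X j).

Definition C_bound d N (rho : 'M[C]_N) (G : 'M[C]_d) (X : 'I_d -> 'M[C]_N) : C :=
  holevo_form G (Zmat rho X).

End QDefs.

(* By D-invariance every X^k is a complex combination sum_l w_kl L~_l of the
   RLDs: rho X = rho o (X + (i/2) D(X)) and rho o L_l = rho L~_l.  With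
   W = (w_kl) and J~ the RLD Fisher matrix this gives P = conj(W) J~ and
   Z(X) = W J~^T W^*, i.e. Z(X) = P conj(J~^-1) P^T with P real.  The Holevo
   functional is invariant under such a real congruence: for A = sqrt(G) P and
   T = sqrt(P^T G P) one has A^* A = T^2, so the real parts agree by
   cyclicity of the trace, and |A M A^*|^2 = A Q A^* and |T M T|^2 = T Q T
   have the same power traces, which determine the trace of the square root
   (a polynomial in the matrix, by interpolating sqrt on the spectrum). *)

From Pilot Require Import Defs.
From HB Require Import structures.
From mathcomp Require Import all_boot all_order all_algebra.
From mathcomp Require Import all_classical all_reals.
From mathcomp Require Import topology normedtype derive.
From mathcomp Require Import complex ring.
Import Order.TTheory GRing.Theory Num.Theory ComplexField.
Import numFieldNormedType.Exports.
Local Open Scope ring_scope.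
Local Open Scope complex_scope.
Local Open Scope classical_set_scope.
Set Implicit Arguments. Unset Strict Implicit. Unset Printing Implicit Defensive.

Lemma unitmx_of_rowker (F : fieldType) n (A : 'M[F]_n) :
  (forall v : 'rV_n, v *m A = 0 -> v = 0) -> A \in unitmx.
Proof.
move=> kerA; rewrite -row_free_unit -kermx_eq0; apply/eqP/row_matrixP => i.
by rewrite row0; apply: kerA; rewrite -row_mul mulmx_ker row0.
Qed.

Lemma mxtrace_exprS_mulC (K : comPzRingType) m n
    (Y : 'M[K]_(m, n)) (Z : 'M[K]_(n, m)) k :
  \tr ((Y *m Z) ^+ k.+1) = \tr ((Z *m Y) ^+ k.+1).
Proof.
have shift j : (Y *m Z) ^+ j.+1 = Y *m (Z *m Y) ^+ j *m Z.
  elim: j => [|j IHj]; first by rewrite expr1 expr0 mulmx1.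
  by rewrite exprS IHj exprS -!mulmxE !mulmxA.
by rewrite shift mxtrace_mulC mulmxA exprS.
Qed.

Lemma mxtrace_sum (K : pzSemiRingType) n I (r : seq I) (P : pred I)
    (F : I -> 'M[K]_n) :
  \tr (\sum_(i <- r | P i) F i) = \sum_(i <- r | P i) \tr (F i).
Proof. exact: raddf_sum. Qed.

Lemma interpolating_poly (F : fieldType) (s : seq F) (f : F -> F) :
  exists p : {poly F}, {in s, forall x, p.[x] = f x}.
Proof.
elim: s => [|a s [p hp]]; first by exists 0.
have [a_s | a_notin_s] := boolP (a \in s).
  by exists p => x; rewrite inE => /predU1P[->|]; apply: hp.
pose q := \prod_(b <- s) ('X - b%:P).
have qE x : q.[x] = \prod_(b <- s) (x - b).
  by rewrite horner_prod; apply: eq_bigr => b _; rewrite hornerXsubC.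
have qa_neq0 : q.[a] != 0.
  rewrite qE prodf_seq_eq0; apply/hasPn => b bs /=; rewrite subr_eq0.
  by apply: contra a_notin_s => /eqP ->.
have q_s x : x \in s -> q.[x] = 0.
  move=> xs; apply/eqP; rewrite qE prodf_seq_eq0; apply/hasP.
  by exists x; rewrite ?subrr ?eqxx.
exists (p + ((f a - p.[a]) / q.[a]) *: q) => x; rewrite inE hornerD hornerZ.
case/predU1P => [->|xs]; first by rewrite divfK // addrC subrK.
by rewrite (q_s x xs) mulr0 addr0 hp.
Qed.

Section QuantumEstimation.
Variable R : realType.
Local Notation C := R[i].

Lemma conjc_i : conjc 'i = - 'i :> C.
Proof. by apply/eqP; rewrite eq_complex /= oppr0 !eqxx. Qed.

Lemma conjc_ge0 (x : C) : 0 <= x -> conjc x = x.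
Proof. by case: x => a b; rewrite lecE /= => /andP[/eqP -> _]; rewrite oppr0. Qed.

Lemma conjMK m n (A : 'M[C]_(m, n)) : conjM (conjM A) = A.
Proof. by apply/matrixP => i j; rewrite !mxE conjcK. Qed.

Lemma conjM_mul m n p (A : 'M[C]_(m, n)) (B : 'M[C]_(n, p)) :
  conjM (A *m B) = conjM A *m conjM B.
Proof. exact: map_mxM. Qed.

Lemma conjM_tr m n (A : 'M[C]_(m, n)) : conjM A^T = (conjM A)^T.
Proof. by apply/matrixP => i j; rewrite !mxE. Qed.

Lemma dagK m n (A : 'M[C]_(m, n)) : dag (dag A) = A.
Proof. by apply/matrixP => i j; rewrite !mxE conjcK. Qed.

Lemma dagM m n p (A : 'M[C]_(m, n)) (B : 'M[C]_(n, p)) :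
  dag (A *m B) = dag B *m dag A.
Proof. by rewrite /dag conjM_mul trmx_mul. Qed.

Lemma dagD m n (A B : 'M[C]_(m, n)) : dag (A + B) = dag A + dag B.
Proof. by apply/matrixP => i j; rewrite !mxE rmorphD. Qed.

Lemma dagN m n (A : 'M[C]_(m, n)) : dag (- A) = - dag A.
Proof. by apply/matrixP => i j; rewrite !mxE rmorphN. Qed.

Lemma dagZ m n a (A : 'M[C]_(m, n)) : dag (a *: A) = conjc a *: dag A.
Proof. by apply/matrixP => i j; rewrite !mxE rmorphM. Qed.

Lemma dag0 m n : dag (0 : 'M[C]_(m, n)) = 0.
Proof. by apply/matrixP => i j; rewrite !mxE conjc0. Qed.

Lemma dag_sum m n I (r : seq I) (P : pred I) (F : I -> 'M[C]_(m, n)) :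
  dag (\sum_(i <- r | P i) F i) = \sum_(i <- r | P i) dag (F i).
Proof.
apply/matrixP => i j; rewrite !mxE !summxE rmorph_sum.
by apply: eq_bigr => k _; rewrite !mxE.
Qed.

Lemma dag_cplxM m n (A : 'M[R]_(m, n)) : dag (cplxM A) = cplxM A^T.
Proof. by apply/matrixP => i j; rewrite !mxE conjc_real. Qed.

Lemma mxtrace_dag n (A : 'M[C]_n) : \tr (dag A) = conjc (\tr A).
Proof. by rewrite /mxtrace rmorph_sum; apply: eq_bigr => i _; rewrite !mxE. Qed.

Lemma herm_unitary_diag n (A : 'M[C]_n) : herm A ->
  exists U (d : 'rV[C]_n),
    [/\ dag U *m U = 1%:M, U *m dag U = 1%:M & A = dag U *m diag_mx d *m U].
Proof.
have dag_conjC (B : 'M[C]_n) : dag B = map_mx Num.conj B^T.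
  by apply/matrixP => i j; rewrite !mxE.
move=> hA; have /orthomx_spectralP A_eq : A \is normalmx.
  by apply/normalmxP; rewrite -!dag_conjC hA.
have U_unitary := spectral_unitarymx A.
have U_inv : invmx (spectralmx A) = dag (spectralmx A).
  by rewrite invmx_unitary // dag_conjC.
exists (spectralmx A), (spectral_diag A); split.
- by rewrite -U_inv mulVmx // unitarymx_unit.
- by rewrite dag_conjC; apply/unitarymxP.
- by rewrite -U_inv.
Qed.

Lemma quad_unitary_row n (U : 'M[C]_n) (d : 'rV[C]_n) i :
  U *m dag U = 1%:M ->
  dag (row i U) != 0 /\
  (dag (dag (row i U)) *m (dag U *m diag_mx d *m U) *m dag (row i U)) 0 0 = d 0 i.
Proof.
move=> UU; have eU : row i U *m dag U = delta_mx 0 i by rewrite -row_mul UU row1.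
have eU' : U *m dag (row i U) = delta_mx i 0.
  rewrite -[LHS]dagK dagM dagK eU.
  by apply/matrixP => a b; rewrite !mxE conjc_nat ord1 !eqxx andbT andTb.
split.
  apply/negP => /eqP/(congr1 (@dag R _ _)); rewrite dagK dag0 => U_i0.
  move: eU; rewrite U_i0 mul0mx => /matrixP/(_ 0 i); rewrite !mxE !eqxx.
  by move/eqP; rewrite eq_sym oner_eq0.
rewrite dagK !mulmxA eU -mulmxA eU' -rowE row_diag_mx -scalemxAl mul_delta_mx.
by rewrite !mxE !eqxx mulr1.
Qed.

Lemma psd_diag_ge0 n (A U : 'M[C]_n) d : psd A -> U *m dag U = 1%:M ->
  A = dag U *m diag_mx d *m U -> forall i, 0 <= d 0 i.
Proof.
move=> [_ A_ge0] UU A_eq i; have [_ <-] := quad_unitary_row d i UU.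
by rewrite -A_eq A_ge0.
Qed.

Lemma posdef_diag_gt0 n (A U : 'M[C]_n) d : posdef A -> U *m dag U = 1%:M ->
  A = dag U *m diag_mx d *m U -> forall i, 0 < d 0 i.
Proof.
move=> [_ A_gt0] UU A_eq i; have [v_neq0 <-] := quad_unitary_row d i UU.
by rewrite -A_eq A_gt0.
Qed.

Lemma psd_dagM m n (A : 'M[C]_(m, n)) : psd (dag A *m A).
Proof.
split; first by rewrite /herm dagM dagK.
move=> v; have -> : dag v *m (dag A *m A) *m v = dag (A *m v) *m (A *m v).
  by rewrite dagM !mulmxA.
by rewrite mxE; apply: sumr_ge0 => i _; rewrite !mxE mulrC mulcJ_ge0.
Qed.

Lemma psd_unitary_diag n (U : 'M[C]_n) (d : 'rV[C]_n) :
  (forall j, 0 <= d 0 j) -> psd (dag U *m diag_mx d *m U).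
Proof.
move=> d_ge0; set e := \row_j sqrtC (d 0 j).
have e_herm : dag (diag_mx e) = diag_mx e.
  apply/matrixP => i j; rewrite !mxE; have [->|ij] := eqVneq i j.
    by rewrite !mulr1n conjc_ge0 // sqrtC_ge0.
  by rewrite !mulr0n conjc0.
have -> : dag U *m diag_mx d *m U = dag (diag_mx e *m U) *m (diag_mx e *m U).
  rewrite dagM e_herm !mulmxA -[dag U *m _ *m diag_mx e]mulmxA mulmx_diag.
  by congr (_ *m diag_mx _ *m _); apply/rowP => j; rewrite !mxE -expr2 sqrtCK.
exact: psd_dagM.
Qed.

Lemma psd_sqrtm n (K : 'M[C]_n) : psd K -> psd (sqrtm K) /\ sqrtm K *m sqrtm K = K.
Proof.
move=> K_psd; suff K_sqrt : exists B, psd B /\ B *m B = K.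
  by rewrite /sqrtm; case: boolp.pselect => // h; case: boolp.cid.
have [U [d [UU UU' K_eq]]] := herm_unitary_diag K_psd.1.
have d_ge0 := psd_diag_ge0 K_psd UU' K_eq.
exists (dag U *m diag_mx (\row_j sqrtC (d 0 j)) *m U); split.
  by apply: psd_unitary_diag => j; rewrite mxE sqrtC_ge0.
rewrite K_eq -!mulmxA (mulmxA U) UU' mul1mx (mulmxA (diag_mx _)) mulmx_diag !mulmxA.
by congr (_ *m diag_mx _ *m _); apply/rowP => j; rewrite !mxE -expr2 sqrtCK.
Qed.

(* mathcomp's [horner_mx] is only defined for sizes of the form [n.+1]. *)
Definition hornermx n (p : {poly C}) (A : 'M[C]_n) : 'M[C]_n :=
  \sum_(k < size p) p`_k *: A ^+ k.

Lemma exprmx_unitary_conj n (U D : 'M[C]_n) k : dag U *m U = 1%:M ->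
  U *m dag U = 1%:M -> (dag U *m D *m U) ^+ k = dag U *m D ^+ k *m U.
Proof.
move=> UU UU'; elim: k => [|k IHk]; first by rewrite !expr0 mulmx1 UU.
by rewrite !exprS IHk -!mulmxE -!mulmxA (mulmxA U) UU' mul1mx.
Qed.

Lemma exprmx_diag n (d : 'rV[C]_n) k :
  diag_mx d ^+ k = diag_mx (\row_j d 0 j ^+ k).
Proof.
elim: k => [|k IHk]; first by apply/matrixP => i j; rewrite expr0 !mxE.
rewrite exprS IHk -mulmxE mulmx_diag.
by congr diag_mx; apply/rowP => j; rewrite !mxE exprS.
Qed.

Lemma hornermx_unitary_conj n (U D : 'M[C]_n) p : dag U *m U = 1%:M ->
  U *m dag U = 1%:M -> hornermx p (dag U *m D *m U) = dag U *m hornermx p D *m U.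
Proof.
move=> UU UU'; rewrite /hornermx mulmx_sumr mulmx_suml; apply: eq_bigr => k _.
by rewrite exprmx_unitary_conj // -scalemxAr -scalemxAl.
Qed.

Lemma hornermx_diag n (d : 'rV[C]_n) p :
  hornermx p (diag_mx d) = diag_mx (\row_j p.[d 0 j]).
Proof.
apply/matrixP => i j; rewrite /hornermx summxE !mxE.
under eq_bigr do rewrite exprmx_diag !mxE.
have [->|ij] := eqVneq i j; last by rewrite !mulr0n big1 // => k _; rewrite mulr0.
by rewrite mulr1n horner_coef; apply: eq_bigr => k _; rewrite mulr1n.
Qed.

Lemma mxtrace_hornermx n (A : 'M[C]_n) p :
  \tr (hornermx p A) = \sum_(k < size p) p`_k * \tr (A ^+ k).
Proof. by rewrite /hornermx mxtrace_sum; apply: eq_bigr => k _; rewrite mxtraceZ. Qed.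

Lemma psd_sqr_hornermx n (B : 'M[C]_n) : psd B ->
  exists2 e : seq C, {in e, forall x, 0 <= x} &
    forall p, {in e, forall x, p.[x ^+ 2] = x} -> hornermx p (B *m B) = B.
Proof.
move=> B_psd; have [U [d [UU UU' B_eq]]] := herm_unitary_diag B_psd.1.
exists [seq d 0 j | j <- enum 'I_n].
  by move=> _ /mapP[j _ ->]; apply: psd_diag_ge0 B_psd UU' B_eq j.
move=> p p_sqrt; rewrite [in RHS]B_eq B_eq -!mulmxA (mulmxA U) UU' mul1mx.
rewrite (mulmxA (diag_mx _)) mulmx_diag !mulmxA hornermx_unitary_conj // hornermx_diag.
congr (_ *m diag_mx _ *m _); apply/rowP => j; rewrite !mxE -expr2 p_sqrt //.
by apply/mapP; exists j; rewrite ?mem_enum.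
Qed.

Lemma mxtrace_sqrtm_eq m n (K1 : 'M[C]_m) (K2 : 'M[C]_n) : psd K1 -> psd K2 ->
  (forall k, \tr (K1 ^+ k.+1) = \tr (K2 ^+ k.+1)) ->
  \tr (sqrtm K1) = \tr (sqrtm K2).
Proof.
move=> K1_psd K2_psd tr_pow.
(* One [p] with [p.[0] = 0] computes both square roots from their squares. *)
have [S1_psd S1_sq] := psd_sqrtm K1_psd; have [S2_psd S2_sq] := psd_sqrtm K2_psd.
have [e1 e1_ge0 S1_poly] := psd_sqr_hornermx S1_psd.
have [e2 e2_ge0 S2_poly] := psd_sqr_hornermx S2_psd.
have [p p_sqrt] := interpolating_poly (0 :: [seq x ^+ 2 | x <- e1 ++ e2]) sqrtC.
have p_sqr x : x \in e1 ++ e2 -> p.[x ^+ 2] = x.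
  move=> x_e; have x_ge0 : 0 <= x.
    by move: x_e; rewrite mem_cat => /orP[/e1_ge0|/e2_ge0].
  by rewrite p_sqrt ?sqrCK // inE (map_f (fun y => y ^+ 2) x_e) orbT.
rewrite -(S1_poly p) => [|x x_e]; last by rewrite p_sqr // mem_cat x_e.
rewrite -(S2_poly p) => [|x x_e]; last by rewrite p_sqr // mem_cat x_e orbT.
rewrite S1_sq S2_sq !mxtrace_hornermx; apply: eq_bigr => -[[|k] _] _ /=.
  by rewrite -horner_coef0 p_sqrt ?mem_head // sqrtC0 !mul0r.
by rewrite tr_pow.
Qed.

Lemma mxtrace_absm_congr m n (A : 'M[C]_(m, n)) (T M : 'M[C]_n) :
  herm T -> dag A *m A = T *m T ->
  \tr (absm (A *m M *m dag A)) = \tr (absm (T *m M *m T)).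
Proof.
move=> T_herm AA; rewrite /absm; apply: mxtrace_sqrtm_eq; try exact: psd_dagM.
move=> k; set Q := dag M *m (T *m T) *m M.
have -> : dag (A *m M *m dag A) *m (A *m M *m dag A) = A *m (Q *m dag A).
  by rewrite /Q -AA !dagM dagK !mulmxA.
have -> : dag (T *m M *m T) *m (T *m M *m T) = T *m (Q *m T).
  by rewrite /Q !dagM T_herm !mulmxA.
by rewrite mxtrace_exprS_mulC [RHS]mxtrace_exprS_mulC -!mulmxA AA.
Qed.

Lemma absmN n (A : 'M[C]_n) : absm (- A) = absm A.
Proof. by rewrite /absm dagN mulNmx mulmxN opprK. Qed.

Lemma ReM_real_congr m n (P : 'M[C]_(m, n)) (V : 'M[C]_n) : conjM P = P ->
  Defs.ReM (P *m conjM V *m P^T) = P *m Defs.ReM V *m P^T.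
Proof.
move=> P_real; rewrite /Defs.ReM !conjM_mul conjMK conjM_tr.
by rewrite P_real -scalemxAr -scalemxAl mulmxDr mulmxDl addrC.
Qed.

Lemma ImM_real_congr m n (P : 'M[C]_(m, n)) (V : 'M[C]_n) : conjM P = P ->
  Defs.ImM (P *m conjM V *m P^T) = - (P *m Defs.ImM V *m P^T).
Proof.
move=> P_real; rewrite /Defs.ImM !conjM_mul conjMK conjM_tr.
by rewrite P_real -scalemxAr -scalemxAl mulmxBr mulmxBl -scalerN opprB.
Qed.

Lemma holevo_form_real_congr m n (G : 'M[C]_m) (P : 'M[C]_(m, n)) (V : 'M[C]_n) :
  psd G -> conjM P = P ->
  holevo_form G (P *m conjM V *m P^T) = holevo_form (P^T *m G *m P) V.
Proof.
move=> G_psd P_real; set H := P^T *m G *m P.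
have dagP : dag P = P^T by rewrite /dag P_real.
have H_psd : psd H.
  split; first by rewrite /herm /H !dagM G_psd.1 /dag conjM_tr trmxK P_real mulmxA.
  move=> v; rewrite (_ : dag v *m H *m v = dag (P *m v) *m G *m (P *m v)).
    exact: G_psd.2.
  by rewrite /H dagM dagP !mulmxA.
have [[S_herm _] SS] := psd_sqrtm G_psd; have [[T_herm _] TT] := psd_sqrtm H_psd.
set S := sqrtm G in S_herm SS *; set T := sqrtm H in T_herm TT *.
have SPPS : dag (S *m P) *m (S *m P) = T *m T.
  by rewrite TT dagM S_herm dagP !mulmxA -(mulmxA P^T) SS.
rewrite /holevo_form -/S -/T ReM_real_congr // ImM_real_congr //; congr (_ + _).
  rewrite mxtrace_mulC !mulmxA SS mxtrace_mulC !mulmxA.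
  by rewrite [RHS]mxtrace_mulC mulmxA TT.
rewrite mulmxN mulNmx absmN.
have -> : S *m (P *m Defs.ImM V *m P^T) *m S = S *m P *m Defs.ImM V *m dag (S *m P).
  by rewrite dagM S_herm dagP !mulmxA.
exact: mxtrace_absm_congr.
Qed.

Lemma jprodD n (r A B : 'M[C]_n) : jprod r (A + B) = jprod r A + jprod r B.
Proof. by rewrite /jprod mulmxDr mulmxDl addrACA scalerDr. Qed.

Lemma jprodZ n (r A : 'M[C]_n) a : jprod r (a *: A) = a *: jprod r A.
Proof. by rewrite /jprod -scalemxAr -scalemxAl -scalerDr !scalerA mulrC. Qed.

Lemma jprod_sum n (r : 'M[C]_n) I (s : seq I) (F : I -> 'M[C]_n) :
  jprod r (\sum_(i <- s) F i) = \sum_(i <- s) jprod r (F i).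
Proof.
elim/big_rec2: _ => [|i A B _ <-]; last exact: jprodD.
by rewrite /jprod mulmx0 mul0mx addr0 scaler0.
Qed.

Lemma dag_jprod n (r A : 'M[C]_n) : herm r -> dag (jprod r A) = jprod r (dag A).
Proof.
by move=> r_herm; rewrite /jprod dagZ dagD !dagM r_herm addrC conjc_inv conjc_nat.
Qed.

Lemma jprod_unitary_diag n (U Y : 'M[C]_n) (r : 'rV[C]_n) : U *m dag U = 1%:M ->
  jprod (dag U *m diag_mx r *m U) (dag U *m Y *m U)
  = dag U *m \matrix_(a, b) ((r 0 a + r 0 b) / 2%:R * Y a b) *m U.
Proof.
move=> UU; have UXZU X Z :
    dag U *m X *m U *m (dag U *m Z *m U) = dag U *m (X *m Z) *m U.
  by rewrite !mulmxA -(mulmxA _ U) UU mulmx1.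
rewrite /jprod !UXZU -mulmxDl -mulmxDr scalemxAl scalemxAr; congr (_ *m _ *m _).
rewrite mul_diag_mx mul_mx_diag; apply/matrixP => a b; rewrite !mxE; ring.
Qed.

Lemma jprod_bij n (rho : 'M[C]_n) : posdef rho -> bijective (jprod rho).
Proof.
move=> rho_posdef; have [U [r [UU UU' rho_eq]]] := herm_unitary_diag rho_posdef.1.
have r_gt0 := posdef_diag_gt0 rho_posdef UU' rho_eq.
have c_neq0 a b : (r 0 a + r 0 b) / 2%:R != 0.
  by rewrite mulf_neq0 ?invr_eq0 ?pnatr_eq0 // gt_eqF // addr_gt0.
have UXU (X : 'M[C]_n) : X = dag U *m (U *m X *m dag U) *m U.
  by rewrite !mulmxA UU mul1mx -mulmxA UU mulmx1.
pose inv M :=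
  dag U *m \matrix_(a, b) ((U *m M *m dag U) a b / ((r 0 a + r 0 b) / 2%:R)) *m U.
exists inv => X.
- rewrite /inv rho_eq {1}[X]UXU jprod_unitary_diag // [RHS]UXU.
  congr (_ *m _ *m _); rewrite !mulmxA UU' mul1mx -mulmxA UU' mulmx1.
  by apply/matrixP => a b; rewrite !mxE mulrC mulKf.
- rewrite /inv rho_eq jprod_unitary_diag // [RHS]UXU; congr (_ *m _ *m _).
  by apply/matrixP => a b; rewrite !mxE mulrC divfK.
Qed.

Lemma Dop_exists n (rho X : 'M[C]_n) : posdef rho -> herm X ->
  exists Y, is_Dop rho X Y.
Proof.
move=> rho_posdef X_herm; have [inv jK Kj] := jprod_bij rho_posdef.
set M := 'i *: (X *m rho - rho *m X).
have M_herm : dag M = M.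
  rewrite /M dagZ dagD dagN !dagM X_herm rho_posdef.1 conjc_i.
  by rewrite scaleNr -scalerN opprB.
exists (inv M); split; last exact: Kj.
by apply: (can_inj jK); rewrite -dag_jprod ?Kj ?M_herm //; exact: rho_posdef.1.
Qed.

Lemma posdef_unit n (rho : 'M[C]_n) : posdef rho -> rho \in unitmx.
Proof.
move=> [_ rho_pos]; apply: unitmx_of_rowker => v v_rho.
apply/eqP/contraT => v_neq0.
have /rho_pos : dag v != 0.
  by apply: contra v_neq0 => /eqP/(congr1 (@dag R _ _)); rewrite dagK dag0 => ->.
by rewrite dagK v_rho mul0mx mxE ltxx.
Qed.

Lemma Dop_jprod n (rho X Y : 'M[C]_n) : is_Dop rho X Y ->
  rho *m X = jprod rho (X + ('i / 2%:R) *: Y).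
Proof.
move=> [_ DY]; rewrite jprodD jprodZ DY (scalerA ('i / 2%:R) 'i) /jprod.
have -> : 'i / 2%:R * 'i = - 2%:R^-1 :> C by rewrite mulrAC -expr2 sqr_i mulN1r.
rewrite scaleNr -scalerBr opprB addrACA subrr addr0 -mulr2n -(scaler_nat 2 (rho *m X)).
by rewrite scalerA mulVf ?scale1r // pnatr_eq0.
Qed.

Lemma SLD_span_RLD_span d n (rho X : 'M[C]_n) (D L Lt : 'I_d -> 'M[C]_n) :
  posdef rho -> (forall l, is_SLD rho (D l) (L l)) ->
  (forall l, is_RLD rho (D l) (Lt l)) -> D_invariant rho L ->
  herm X -> in_real_span L X ->
  exists w : 'I_d -> C, X = \sum_l w l *: Lt l.
Proof.
move=> rho_posdef SLD RLD D_inv X_herm X_span.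
have [Y DX] := Dop_exists rho_posdef X_herm.
have [e Y_eq] := D_inv X Y X_span DX; have [c X_eq] := X_span.
exists (fun l => (c l)%:C + ('i / 2%:R) * (e l)%:C).
apply: (can_inj (mulKmx (posdef_unit rho_posdef))).
rewrite (Dop_jprod DX) {1}X_eq Y_eq scaler_sumr -big_split /= jprod_sum mulmx_sumr.
apply: eq_bigr => l _.
by rewrite scalerA -scalerDl jprodZ -(SLD l).2 (RLD l) scalemxAr.
Qed.

Lemma mxtrace_mul_sum n d (A : 'M[C]_n) (b : 'I_d -> C) (B : 'I_d -> 'M[C]_n) :
  \tr (A *m \sum_j b j *: B j) = \sum_j b j * \tr (A *m B j).
Proof.
rewrite mulmx_sumr mxtrace_sum; apply: eq_bigr => j _.
by rewrite -scalemxAr mxtraceZ.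
Qed.

Lemma mxtrace_mul_sum2 n d1 d2 (rho : 'M[C]_n) (a : 'I_d1 -> C) (b : 'I_d2 -> C)
    (A : 'I_d1 -> 'M[C]_n) (B : 'I_d2 -> 'M[C]_n) :
  \tr (rho *m (\sum_k a k *: A k) *m (\sum_j b j *: B j))
  = \sum_k \sum_j a k * b j * \tr (rho *m A k *m B j).
Proof.
rewrite [rho *m _]mulmx_sumr mulmx_suml mxtrace_sum; apply: eq_bigr => k _.
rewrite -scalemxAr -scalemxAl mxtraceZ mxtrace_mul_sum mulr_sumr.
by apply: eq_bigr => j _; rewrite mulrA.
Qed.

Lemma mxtrace_posdef_eq0 n (rho F : 'M[C]_n) : posdef rho ->
  \tr (rho *m F *m dag F) = 0 -> F = 0.
Proof.
move=> [_ rho_pos]; rewrite mxtrace_mulC mulmxA => tr_eq0.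
have colE c : (dag F *m rho *m F) c c = (dag (col c F) *m rho *m col c F) 0 0.
  rewrite !mxE; apply: eq_bigr => j _; rewrite !mxE; congr (_ * _).
  by apply: eq_bigr => k _; rewrite !mxE.
have diag_ge0 c : 0 <= (dag F *m rho *m F) c c.
  rewrite colE; have [->|/rho_pos/ltW //] := eqVneq (col c F) 0.
  by rewrite mulmx0 mxE.
apply/matrixP => a c; rewrite mxE.
have [/matrixP/(_ a 0)|col_neq0] := eqVneq (col c F) 0; first by rewrite !mxE.
have := rho_pos _ col_neq0.
by rewrite -colE (psumr_eq0P (fun c _ => diag_ge0 c) tr_eq0) // ltxx.
Qed.

Lemma herm_real_free_complex d n (D : 'I_d -> 'M[C]_n) : (forall l, herm (D l)) ->
  (forall c : 'I_d -> R, \sum_l (c l)%:C *: D l = 0 -> forall l, c l = 0) ->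
  forall v : 'I_d -> C, \sum_l v l *: D l = 0 -> forall l, v l = 0.
Proof.
move=> D_herm D_free v v_eq0.
set A := \sum_l (complex.Re (v l))%:C *: D l.
set B := \sum_l (complex.Im (v l))%:C *: D l.
have herm_real (c : 'I_d -> R) : dag (\sum_l (c l)%:C *: D l) = \sum_l (c l)%:C *: D l.
  by rewrite dag_sum; apply: eq_bigr => l _; rewrite dagZ conjc_real D_herm.
have AiB : A + 'i *: B = 0.
  rewrite -v_eq0 /A /B scaler_sumr -big_split /=; apply: eq_bigr => l _.
  by rewrite scalerA -scalerDl -complexE.
have AiB' : A - 'i *: B = 0.
  by move: (congr1 (@dag R _ _) AiB); rewrite dagD dagZ !herm_real conjc_i scaleNr dag0.
have A_eq0 : A = 0.
  have : (A + 'i *: B) + (A - 'i *: B) = 0 by rewrite AiB AiB' addr0.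
  rewrite addrACA subrr addr0 -mulr2n -(scaler_nat 2 A) => /eqP.
  by rewrite scaler_eq0 pnatr_eq0 => /eqP.
have B_eq0 : B = 0.
  have i_neq0 : 'i != 0 :> C.
    by apply/eqP => /(congr1 (@complex.Im R))/eqP; rewrite oner_eq0.
  move: AiB; rewrite A_eq0 add0r => /eqP.
  by rewrite scaler_eq0 (negbTE i_neq0) => /eqP.
by move=> l; rewrite [v l]complexE (D_free _ A_eq0) (D_free _ B_eq0) mulr0 addr0.
Qed.

Lemma RLD_fisher_unit d n (rho : 'M[C]_n) (D Lt : 'I_d -> 'M[C]_n) : posdef rho ->
  (forall l, herm (D l)) ->
  (forall c : 'I_d -> R, \sum_l (c l)%:C *: D l = 0 -> forall l, c l = 0) ->
  (forall l, is_RLD rho (D l) (Lt l)) -> RLD_fisher rho Lt \in unitmx.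
Proof.
move=> rho_posdef D_herm D_free RLD; apply: unitmx_of_rowker => v vJ.
set F := \sum_k conjc (v 0 k) *: Lt k.
have F_eq0 : F = 0.
  apply: (mxtrace_posdef_eq0 rho_posdef).
  have -> : dag F = \sum_j v 0 j *: dag (Lt j).
    by rewrite dag_sum; apply: eq_bigr => j _; rewrite dagZ conjcK.
  have : (v *m RLD_fisher rho Lt *m dag v) 0 0 = 0 by rewrite vJ mul0mx mxE.
  rewrite mxE => <-; rewrite mxtrace_mul_sum2; apply: eq_bigr => k _.
  rewrite mxE mulr_suml; apply: eq_bigr => j _; rewrite !mxE; ring.
have conj_v_eq0 : \sum_k conjc (v 0 k) *: D k = 0.
  transitivity (rho *m F); last by rewrite F_eq0 mulmx0.
  rewrite /F mulmx_sumr; apply: eq_bigr => k _.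
  by rewrite (RLD k) scalemxAr.
apply/rowP => k; rewrite mxE -[v 0 k]conjcK.
by rewrite (herm_real_free_complex D_herm D_free conj_v_eq0) conjc0.
Qed.

Lemma mxtrace_herm_mul_real n (A B : 'M[C]_n) : herm A -> herm B ->
  conjc (\tr (A *m B)) = \tr (A *m B).
Proof.
by move=> A_herm B_herm; rewrite -mxtrace_dag dagM A_herm B_herm mxtrace_mulC.
Qed.

Lemma Zmat_RLD_expansion d1 d2 n (rho : 'M[C]_n) (Lt : 'I_d2 -> 'M[C]_n)
    (X : 'I_d1 -> 'M[C]_n) (w : 'I_d1 -> 'I_d2 -> C) :
  RLD_fisher rho Lt \in unitmx -> (forall k, herm (X k)) ->
  (forall k, X k = \sum_l w k l *: Lt l) ->
  let P := \matrix_(k, l) \tr (rho *m Lt l *m X k) in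
  Zmat rho X = conjM P *m conjM (invmx (RLD_fisher rho Lt)) *m P^T.
Proof.
move=> J_unit X_herm X_eq P; set J := RLD_fisher rho Lt in J_unit *.
pose W := \matrix_(k, l) w k l.
have X_eq' k : X k = \sum_l conjc (w k l) *: dag (Lt l).
  by rewrite -[LHS]X_herm X_eq dag_sum; apply: eq_bigr => l _; rewrite dagZ.
have P_eq : P = conjM W *m J.
  apply/matrixP => k l; rewrite !mxE X_eq' mxtrace_mul_sum.
  by apply: eq_bigr => m _; rewrite !mxE.
have Z_eq : Zmat rho X = W *m J^T *m dag W.
  apply/matrixP => k j; rewrite !mxE X_eq X_eq' mxtrace_mul_sum2 exchange_big /=.
  apply: eq_bigr => l _; rewrite !mxE mulr_suml; apply: eq_bigr => m _.
  by rewrite !mxE; ring.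
have W_eq : W = conjM P *m conjM (invmx J).
  by rewrite -conjM_mul P_eq mulmxK // conjMK.
rewrite Z_eq W_eq dagM /dag !conjMK -!mulmxA; congr (_ *m (_ *m _)).
by rewrite mulmxA -trmx_mul mulVmx // trmx1 mul1mx.
Qed.

Lemma cplxM_psd n (G : 'M[R]_n) : real_sym_posdef G -> psd (cplxM G).
Proof.
move=> [G_sym G_pos].
have cplxM_mul m p q (A : 'M[R]_(m, p)) (B : 'M[R]_(p, q)) :
  cplxM (A *m B) = cplxM A *m cplxM B by exact: (map_mxM (real_complex R)).
split; first by rewrite /herm dag_cplxM G_sym.
move=> v; set a := map_mx (@complex.Re R) v; set b := map_mx (@complex.Im R) v.
have cross : b^T *m G *m a = a^T *m G *m b.
  rewrite [LHS]mx11_scalar -tr_scalar_mx -mx11_scalar.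
  by rewrite !trmx_mul trmxK G_sym mulmxA.
have -> : dag v *m cplxM G *m v = cplxM (a^T *m G *m a + b^T *m G *m b).
  have -> : v = cplxM a + 'i *: cplxM b.
    by apply/matrixP => i j; rewrite !mxE -complexE.
  rewrite dagD dagZ !dag_cplxM conjc_i !mulmxDl !mulmxDr -!scalemxAl -!scalemxAr.
  rewrite -!cplxM_mul cross scalerA mulNr -expr2 sqr_i opprK scale1r scaleNr.
  by rewrite addrA addrK /cplxM map_mxD.
have quad_ge0 (x : 'cV[R]_n) : 0 <= (x^T *m G *m x) 0 0.
  by have [->|/G_pos/ltW //] := eqVneq x 0; rewrite mulmx0 mxE.
by rewrite mxE ler0c mxE addr_ge0.
Qed.

End QuantumEstimation.

Unset Implicit Arguments.

Theorem mainTheorem3 (R : realType) (N d1 d2 : nat)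
  (Theta2 : set 'rV[R]_d2) (rho : 'rV[R]_d2 -> 'M[R[i]]_N)
  (theta : 'rV[R]_d2)
  (L Lt : 'I_d2 -> 'M[R[i]]_N) (X : 'I_d1 -> 'M[R[i]]_N) (G : 'M[R]_d1) :
  (* S_2 : a quantum statistical model on the open set Theta2 *)
  open Theta2 ->
  (forall t, Theta2 t -> strictly_pos_density (rho t)) ->
  (forall (i j : 'I_N) t, Theta2 t ->
     differentiable (fun s => @complex.Re R (rho s i j)) t /\
     differentiable (fun s => @complex.Im R (rho s i j)) t) ->
  (* the model is regular at theta: the partial derivatives are linearly independent *)
  (forall c : 'I_d2 -> R,
     \sum_(l < d2) (c l)%:C *: pderiv rho theta l = 0 -> forall l, c l = 0) ->
  (* submodel S_1 : theta = (theta_1, ..., theta_{d1}, 0, ..., 0) *)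
  (d1 <= d2)%N ->
  Theta2 theta ->
  (forall l : 'I_d2, (d1 <= l)%N -> theta 0 l = 0) ->
  (forall l, is_SLD (rho theta) (pderiv rho theta l) (L l)) ->
  (forall l, is_RLD (rho theta) (pderiv rho theta l) (Lt l)) ->
  D_invariant (rho theta) L ->
  (forall j, herm (X j)) ->
  (forall j, in_real_span L (X j)) ->
  (forall (j : 'I_d1) (k : 'I_d2), (k < d1)%N ->
     \tr (pderiv rho theta k *m X j) = ((j == k :> nat)%:R : R[i])) ->
  real_sym_posdef G ->
  let P : 'M[R[i]]_(d1, d2) :=
    \matrix_(k, l) \tr (pderiv rho theta l *m X k) in
  C_bound (rho theta) (cplxM G) X
  = RLD_bound (rho theta) Lt (P^T *m cplxM G *m P).
Proof.
move=> _ rho_density _ regular _ theta_in _ SLD RLD D_inv X_herm X_span _ G_posdef P.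
have rho_posdef := (rho_density theta theta_in).1.
have D_herm l : herm (pderiv rho theta l).
  by rewrite /herm (SLD l).2 dag_jprod ?(SLD l).1 //; exact: rho_posdef.1.
have J_unit := RLD_fisher_unit rho_posdef D_herm regular RLD.
have /boolp.choice[w X_eq] : forall k, exists wk : 'I_d2 -> R[i],
    X k = \sum_l wk l *: Lt l.
  move=> k; exact: SLD_span_RLD_span rho_posdef SLD RLD D_inv (X_herm k) (X_span k).
have P_eq : P = \matrix_(k, l) \tr (rho theta *m Lt l *m X k).
  by apply/matrixP => k l; rewrite !mxE (RLD l).
have P_real : conjM P = P.
  by apply/matrixP => k l; rewrite !mxE mxtrace_herm_mul_real.
rewrite /C_bound (Zmat_RLD_expansion J_unit X_herm X_eq) -P_eq P_real.
exact: holevo_form_real_congr (cplxM_psd G_posdef) P_real.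
Qed.
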